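(* Let $F$, $H$, $X$, $\Omega$, $Q$ and the sequences generated by the IneIREG method be as described in the context, and suppose $H$ is $\mu$-strongly monotone for some $\mu>0$. Suppose $(\eta_k)$ is nonincreasing; $0<\lambda_k<1/L_k$ for all $k\ge0$, where $L_k:=L_F+\eta_kL_H$; and $\alpha_0\in[0,1]$ and $\alpha_{k+1}\le(1-\beta_k)\alpha_k$ for all $k\ge0$, where $\beta_k:=\big(\frac{1}{1-\lambda_k^2L_k^2}+\frac{1}{2\lambda_k\eta_k\mu}\big)^{-1}$. Define $p_{-1}:=1$, $p_k:=\big(\prod_{i=0}^k(1-\beta_i)\big)^{-1}$ for $k\ge0$, and for $k\ge1$, $\Lambda_k:=\sum_{j=0}^{k-1}\lambda_j\eta_jp_j$, $\overline y_k:=\Lambda_k^{-1}\sum_{j=0}^{k-1}\lambda_j\eta_jp_jy_j$. Then for all $k\ge1$, $$0\le\mathrm{Gap}(\overline y_k,F,X)\le\frac{1}{2\Lambda_k}\Big(\eta_0D_X^2+\sum_{j=0}^{k-1}\eta_jp_{j-1}\delta_j+2\Big(\sum_{j=0}^{k-1}\lambda_j\eta_j^2p_j\Big)C_HD_X\Big).$$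
   Context: Work in $\mathbb{R}^n$ with Euclidean inner product $\langle\cdot,\cdot\rangle$ and norm $\|\cdot\|$. The maps $F\colon \mathrm{Dom}\,F\to\mathbb{R}^n$ and $H\colon\mathrm{Dom}\,H\to\mathbb{R}^n$ are monotone and Lipschitz continuous with constants $L_F>0$ and $L_H>0$; $H$ is $\mu$-strongly monotone means $\langle H(x)-H(y),x-y\rangle\ge\mu\|x-y\|^2$ for all $x,y\in\mathrm{Dom}\,H$. $X$ is a nonempty compact convex set and $\Omega$ a nonempty closed convex set with $X\subset\Omega\subset\mathrm{Dom}\,F\cap\mathrm{Dom}\,H$; $P_X,P_\Omega$ denote orthogonal projections. $Q:=\{x\in X:\langle F(x),y-x\rangle\ge0\ \forall y\in X\}$ is assumed nonempty. $D_X:=\sup_{x,y\in X}\|x-y\|$, $C_H:=\sup_{x\in X}\|H(x)\|$. $\mathrm{Gap}(z,F,X):=\sup_{x\in X}\langle F(x),z-x\rangle$. IneIREG method: start with $x_0=x_{-1}\in X$; for $k=0,1,\dots$, with parameters $\alpha_k\ge0$, $\lambda_k>0$, $\eta_k>0$, set $w_k=x_k+\alpha_k(x_k-x_{k-1})$, $w'_k=P_\Omega(w_k)$, $y_k=P_X\big(w_k-\lambda_k(F(w'_k)+\eta_kH(w'_k))\big)$, $x_{k+1}=P_X\big(w_k-\lambda_k(F(y_k)+\eta_kH(y_k))\big)$. Also $\delta_k:=\alpha_k(1+\alpha_k)\|x_k-x_{k-1}\|^2$ for $k\ge0$. *)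

From HB Require Import structures.
From mathcomp Require Import all_boot all_order all_algebra.
From mathcomp Require Import all_classical all_reals all_analysis.
Set Implicit Arguments. Unset Strict Implicit. Unset Printing Implicit Defensive.
Import Order.TTheory GRing.Theory Num.Theory.
Import numFieldNormedType.Exports.
Local Open Scope classical_set_scope.
Local Open Scope ring_scope.

Section Defs.
Variables (R : realType) (n : nat).
Notation V := 'rV[R]_n.

Definition dotp (u v : V) : R := \sum_(i < n) u ord0 i * v ord0 i.
Definition enorm (u : V) : R := Num.sqrt (dotp u u).

Definition convex_setE (A : set V) : Prop :=
  forall x y t, A x -> A y -> 0 <= t -> t <= 1 -> A (t *: x + (1 - t) *: y).

Definition is_proj (C : set V) (P : V -> V) : Prop :=
  forall x, C (P x) /\ forall y, C y -> enorm (x - P x) <= enorm (x - y).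

Definition op_monotone_on (D : set V) (G : V -> V) : Prop :=
  forall x y, D x -> D y -> 0 <= dotp (G x - G y) (x - y).

Definition op_strongly_monotone_on (D : set V) (G : V -> V) (mu : R) : Prop :=
  forall x y, D x -> D y -> mu * enorm (x - y) ^+ 2 <= dotp (G x - G y) (x - y).

Definition op_lipschitz_on (D : set V) (G : V -> V) (L : R) : Prop :=
  forall x y, D x -> D y -> enorm (G x - G y) <= L * enorm (x - y).

Definition diam (X : set V) : R :=
  sup [set r | exists x y, X x /\ X y /\ r = enorm (x - y)].

Definition supnorm (X : set V) (H : V -> V) : R :=
  sup [set r | exists x, X x /\ r = enorm (H x)].

Definition Gap (z : V) (F : V -> V) (X : set V) : R :=
  sup [set r | exists x, X x /\ r = dotp (F x) (z - x)].

Definition VIsol (F : V -> V) (X : set V) : set V :=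
  [set x | X x /\ forall y, X y -> 0 <= dotp (F x) (y - x)].
End Defs.

(* Fix z in X and put a_k := |x_k - z|^2.  The projections defining y_k and
   x_{k+1}, the Lipschitz bound for F + eta_k H (used at P_Omega w_k, which is no
   farther from y_k than w_k is) and the strong monotonicity of H give
     a_{k+1} <= (1 - beta_k) |w_k - z|^2 - 2 lambda_k (<F z, y_k - z> - eta_k C_H D_X),
   with |w_k - z|^2 = (1 + alpha_k) a_k - alpha_k a_{k-1} + delta_k.  Because
   alpha_{k+1} <= (1 - beta_k) alpha_k, p_k (1 - beta_k) = p_{k-1} and eta is
   nonincreasing, eta_k p_{k-1} (a_k - alpha_k a_{k-1} + alpha_k D_X^2) is a
   Lyapunov function; telescoping bounds sum_j lambda_j eta_j p_j <F z, y_j - z>,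
   which is Lambda_k <F z, ybar_k - z>, uniformly in z.  Testing at a solution of
   the variational inequality instead gives Gap >= 0. *)

From HB Require Import structures.
From mathcomp Require Import all_boot all_order all_algebra.
From mathcomp Require Import all_classical all_reals all_analysis.
From mathcomp Require Import ring lra.
Import Order.TTheory GRing.Theory Num.Theory.
Import numFieldNormedType.Exports.
Local Open Scope classical_set_scope.
Local Open Scope ring_scope.

Set Implicit Arguments. Unset Strict Implicit.

Section Scalar.
Variable R : realFieldType.
Implicit Types (x y b : R).

Lemma subr_sqrM_gt0 x y : 0 <= x * y -> x * y < 1 -> 0 < 1 - x ^+ 2 * y ^+ 2.
Proof. by move=> xy_ge0 xy_lt1; rewrite -exprMn subr_gt0 exprn_ilt1. Qed.

Lemma contraction_rate_lt1 x y b : 0 < x -> 0 < y -> x * y < 1 -> 0 < b ->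
  ((1 - x ^+ 2 * y ^+ 2)^-1 + b^-1)^-1 < 1.
Proof.
move=> x_gt0 y_gt0 xy_lt1 b_gt0.
have c_gt0 := subr_sqrM_gt0 (ltW (mulr_gt0 x_gt0 y_gt0)) xy_lt1.
have inv_ge1 : 1 <= (1 - x ^+ 2 * y ^+ 2)^-1.
  by rewrite invf_ge1 // lerBlDr lerDl -exprMn sqr_ge0.
have binv_gt0 : 0 < b^-1 by rewrite invr_gt0.
by rewrite invf_lt1; lra.
Qed.

Lemma sumr_ord_gt0 k (c : nat -> R) : (0 < k)%N -> (forall j, 0 < c j) ->
  0 < \sum_(j < k) c j.
Proof.
case: k => // k _ c_gt0; rewrite big_ord_recl ltr_wpDr //.
by apply: sumr_ge0 => j _; exact: ltW.
Qed.

End Scalar.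

Section Euclid.
Variables (R : realType) (n : nat).
Notation V := 'rV[R]_n.
Implicit Types (u v w z : V) (a b : R).

Lemma dotpC u v : dotp u v = dotp v u.
Proof. by apply: eq_bigr => i _; rewrite mulrC. Qed.

Lemma dotpDl u v w : dotp (u + v) w = dotp u w + dotp v w.
Proof. by rewrite /dotp -big_split; apply: eq_bigr => i _; rewrite mxE mulrDl. Qed.

Lemma dotpDr u v w : dotp w (u + v) = dotp w u + dotp w v.
Proof. by rewrite dotpC dotpDl !(dotpC w). Qed.

Lemma dotpNl u v : dotp (- u) v = - dotp u v.
Proof. by rewrite /dotp -sumrN; apply: eq_bigr => i _; rewrite mxE mulNr. Qed.

Lemma dotpNr u v : dotp u (- v) = - dotp u v.
Proof. by rewrite dotpC dotpNl dotpC. Qed.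

Lemma dotpZl a u v : dotp (a *: u) v = a * dotp u v.
Proof. by rewrite /dotp mulr_sumr; apply: eq_bigr => i _; rewrite mxE mulrA. Qed.

Lemma dotpZr a u v : dotp u (a *: v) = a * dotp u v.
Proof. by rewrite dotpC dotpZl dotpC. Qed.

Lemma dotp0r u : dotp u 0 = 0.
Proof. by rewrite -(scale0r 0) dotpZr mul0r. Qed.

Definition dotpE := (dotpDl, dotpDr, dotpNl, dotpNr, dotpZl, dotpZr).

Lemma dotp_sumr u k (v : 'I_k -> V) :
  dotp u (\sum_(j < k) v j) = \sum_(j < k) dotp u (v j).
Proof.
rewrite /dotp; under eq_bigr do rewrite summxE mulr_sumr.
exact: exchange_big.
Qed.

Lemma dotp_ge0 u : 0 <= dotp u u.
Proof. by apply: sumr_ge0 => i _; rewrite -expr2 sqr_ge0. Qed.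

Lemma dotpp_eq0 u : dotp u u = 0 -> u = 0.
Proof.
move=> /eqP; rewrite psumr_eq0 => [/allP u0|i _]; last by rewrite -expr2 sqr_ge0.
apply/rowP => i; rewrite mxE; apply/eqP.
by rewrite -sqrf_eq0 expr2; apply: u0 (mem_index_enum i).
Qed.

Lemma enorm_ge0 u : 0 <= enorm u.
Proof. exact: sqrtr_ge0. Qed.

Lemma enorm_sqr u : enorm u ^+ 2 = dotp u u.
Proof. by rewrite sqr_sqrtr // dotp_ge0. Qed.

Lemma enormN u : enorm (- u) = enorm u.
Proof. by rewrite /enorm dotpNl dotpNr opprK. Qed.

Lemma enormZ a u : enorm (a *: u) = `|a| * enorm u.
Proof. by rewrite /enorm dotpZl dotpZr mulrA -expr2 sqrtrM ?sqr_ge0 // sqrtr_sqr. Qed.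

Lemma dotp_sqr_le u v : dotp u v ^+ 2 <= dotp u u * dotp v v.
Proof.
have [/dotpp_eq0 ->|v_neq0] := eqVneq (dotp v v) 0.
  by rewrite !dotp0r mulr0 expr0n.
have v_gt0 : 0 < dotp v v by rewrite lt_def v_neq0 dotp_ge0.
have := dotp_ge0 (dotp v v *: u - dotp u v *: v).
rewrite !dotpE (dotpC v u) => h.
have : 0 <= dotp v v * (dotp u u * dotp v v - dotp u v ^+ 2) by lra.
by rewrite pmulr_rge0 // subr_ge0.
Qed.

Lemma dotp_le_enorm u v : dotp u v <= enorm u * enorm v.
Proof.
have [uv_le0|uv_gt0] := lerP (dotp u v) 0.
  by apply: le_trans uv_le0 _; rewrite mulr_ge0 ?enorm_ge0.
rewrite -(@ler_pXn2r _ 2) ?nnegrE ?mulr_ge0 ?enorm_ge0 ?(ltW uv_gt0) //.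
by rewrite exprMn !enorm_sqr dotp_sqr_le.
Qed.

Lemma ler_enormD u v : enorm (u + v) <= enorm u + enorm v.
Proof.
rewrite -(@ler_pXn2r _ 2) ?nnegrE ?addr_ge0 ?enorm_ge0 //.
rewrite sqrrD !enorm_sqr !dotpE (dotpC v u).
have := dotp_le_enorm u v; lra.
Qed.

Lemma dotp_young u v : 2 * dotp u v <= dotp u u + dotp v v.
Proof. by have := dotp_ge0 (u - v); rewrite !dotpE (dotpC v u); lra. Qed.

Lemma dotp_parallel_sum_le u v a b : 0 < a -> 0 < b ->
  (a^-1 + b^-1)^-1 * dotp (u + v) (u + v) <= a * dotp u u + b * dotp v v.
Proof.
move=> a_gt0 b_gt0; have ab_gt0 : 0 < a + b by lra.
have -> : (a^-1 + b^-1)^-1 = a * b / (a + b) by field; rewrite ?gt_eqF //; lra.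
rewrite mulrAC ler_pdivrMr //.
have := dotp_ge0 (a *: u - b *: v); rewrite !dotpE (dotpC v u); nra.
Qed.

Lemma dotp_extrapolate u v z a :
  dotp (u + a *: (u - v) - z) (u + a *: (u - v) - z) =
  (1 + a) * dotp (u - z) (u - z) - a * dotp (v - z) (v - z)
  + a * (1 + a) * dotp (u - v) (u - v).
Proof. by rewrite !dotpE (dotpC v u) (dotpC z u) (dotpC z v); ring. Qed.

Lemma dotp_wavg u z (c : nat -> R) (y : nat -> V) k :
  \sum_(j < k) c j != 0 ->
  dotp u ((\sum_(j < k) c j)^-1 *: \sum_(j < k) c j *: y j - z)
  = (\sum_(j < k) c j)^-1 * \sum_(j < k) c j * dotp u (y j - z).
Proof.
move=> c_neq0; rewrite dotpDr dotpNr dotpZr dotp_sumr.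
under [X in _ = _ * X]eq_bigr do rewrite dotpDr dotpNr mulrBr.
rewrite sumrB -mulr_suml mulrBr mulrA mulVf // mul1r.
by under [\sum_(j < k) dotp _ _]eq_bigr do rewrite dotpZr.
Qed.

Lemma extragradient_ineq (w z y x' Gy Gw : V) (lam c : R) :
  dotp (w - lam *: Gy - x') (z - x') <= 0 ->
  dotp (w - lam *: Gw - y) (x' - y) <= 0 ->
  2 * lam * dotp (Gw - Gy) (x' - y) <= c * dotp (w - y) (w - y) + dotp (x' - y) (x' - y) ->
  dotp (x' - z) (x' - z) <= dotp (w - z) (w - z) - (1 - c) * dotp (w - y) (w - y)
    - 2 * lam * dotp Gy (y - z).
Proof.
(* Orient all inner products the same way so that [nra] sees each as one atom. *)
rewrite !dotpE.
rewrite ?(dotpC z w) ?(dotpC y w) ?(dotpC x' w) ?(dotpC Gy w) ?(dotpC Gw w).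
rewrite ?(dotpC y z) ?(dotpC x' z) ?(dotpC Gy z) ?(dotpC Gw z).
rewrite ?(dotpC x' y) ?(dotpC Gy y) ?(dotpC Gw y) ?(dotpC Gy x') ?(dotpC Gw x').
nra.
Qed.

End Euclid.

Section Projection.
Variables (R : realType) (n : nat) (C : set 'rV[R]_n) (P : 'rV[R]_n -> 'rV[R]_n).
Hypotheses (C_convex : convex_setE C) (P_proj : is_proj C P).

Lemma proj_variational z y : C y -> dotp (z - P z) (y - P z) <= 0.
Proof.
move=> Cy; have [CPz Pz_min] := P_proj z.
have two_s_le t : 0 < t -> t <= 1 ->
    2 * dotp (z - P z) (y - P z) <= t * dotp (y - P z) (y - P z).
  move=> t_gt0 t_le1.
  have := Pz_min _ (C_convex Cy CPz (ltW t_gt0) t_le1).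
  rewrite -(@ler_pXn2r _ 2) ?nnegrE ?enorm_ge0 // !enorm_sqr.
  have -> : z - (t *: y + (1 - t) *: P z) = z - P z - t *: (y - P z).
    by apply/rowP => i; rewrite !mxE; ring.
  move: (z - P z) (y - P z) => u v.
  rewrite !dotpE (dotpC v u); nra.
set s := dotp _ _ in two_s_le *; set E := dotp _ _ in two_s_le.
rewrite leNgt; apply/negP => s_gt0.
have E_ge0 : 0 <= E := dotp_ge0 _.
have sE_gt0 : 0 < s + E by lra.
have := two_s_le (s / (s + E)) (divr_gt0 s_gt0 sE_gt0).
rewrite ler_pdivrMr // mul1r mulrAC ler_pdivlMr //; nra.
Qed.

Lemma proj_dist_le z y : C y -> dotp (P z - y) (P z - y) <= dotp (z - y) (z - y).
Proof.
move=> /(proj_variational z); rewrite -[y - P z]opprB.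
have -> : z - y = (z - P z) + (P z - y) by rewrite addrA subrK.
move: (z - P z) (P z - y) => u v.
by rewrite !dotpE (dotpC v u); have := dotp_ge0 u; lra.
Qed.

End Projection.

Section CompactBounds.
Variables (R : realType) (n : nat).
Notation V := 'rV[R]_n.

Lemma compact_enorm_bounded (X : set V) : compact X ->
  exists B, forall v, X v -> enorm v <= B.
Proof.
move=> /compact_bounded [M [_ HM]].
exists (Num.sqrt (n%:R * (M + 1) ^+ 2)) => v Xv; apply: ler_wsqrtr.
have M_lt : M < M + 1 by rewrite ltrDl.
have vM i : `|v ord0 i| <= M + 1.
  apply: le_trans (HM _ M_lt v Xv).
  by rewrite [leRHS]/Num.norm /= mx_normrE; apply/bigmax_geP; right; exists (ord0, i).
rewrite /dotp -[n in n%:R]card_ord -sum1_card natr_sum mulr_suml.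
apply: ler_sum => i _; rewrite mul1r -expr2 -real_normK ?num_real //.
by rewrite ler_pXn2r ?nnegrE ?normr_ge0 //; apply: le_trans (vM i).
Qed.

Lemma enorm_le_diam (X : set V) a b : compact X -> X a -> X b ->
  enorm (a - b) <= diam X.
Proof.
move=> /compact_enorm_bounded [B XB] Xa Xb.
apply: ub_le_sup; last by exists a, b.
exists (B + B) => _ [x [y [Xx [Xy ->]]]].
by apply: le_trans (ler_enormD _ _) _; rewrite enormN lerD ?XB.
Qed.

Lemma dotp_le_diam (X : set V) a b : compact X -> X a -> X b ->
  dotp (a - b) (a - b) <= diam X ^+ 2.
Proof.
move=> X_compact Xa Xb; rewrite -enorm_sqr ler_pXn2r ?nnegrE ?enorm_ge0 //.
- exact: enorm_le_diam.
- exact: le_trans (enorm_ge0 _) (enorm_le_diam X_compact Xa Xa).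
Qed.

Lemma enorm_le_supnorm (X D : set V) (H : V -> V) (L : R) a :
  compact X -> X `<=` D -> op_lipschitz_on D H L -> 0 <= L -> X a ->
  enorm (H a) <= supnorm X H.
Proof.
move=> /compact_enorm_bounded [B XB] XD H_lip L_ge0 Xa.
apply: ub_le_sup; last by exists a.
exists (enorm (H a) + L * (B + B)) => _ [x [Xx ->]].
have -> : H x = H a + (H x - H a) by rewrite addrC subrK.
apply: le_trans (ler_enormD _ _) _; rewrite lerD2l.
apply: le_trans (H_lip _ _ (XD _ Xx) (XD _ Xa)) _.
rewrite ler_wpM2l //; apply: le_trans (ler_enormD _ _) _.
by rewrite enormN lerD ?XB.
Qed.

End CompactBounds.

Section WeightedGap.
Variables (R : realType) (n : nat) (F : 'rV[R]_n -> 'rV[R]_n) (X : set 'rV[R]_n).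
Variables (c : nat -> R) (y : nat -> 'rV[R]_n) (k : nat).
Hypothesis c_sum_gt0 : 0 < \sum_(j < k) c j.
Let ybar := (\sum_(j < k) c j)^-1 *: \sum_(j < k) c j *: y j.

Lemma Gap_wavg_ge0 : VIsol F X !=set0 -> (forall j, X (y j)) ->
  (forall j, 0 <= c j) -> 0 <= Gap ybar F X.
Proof.
move=> [z0 [Xz0 z0_sol]] Xy c_ge0.
have gap_z0 : 0 <= dotp (F z0) (ybar - z0).
  rewrite dotp_wavg ?gt_eqF // mulr_ge0 ?invr_ge0 ?(ltW c_sum_gt0) //.
  by apply: sumr_ge0 => j _; rewrite mulr_ge0 ?z0_sol.
(* When the set has no supremum, [Gap] is the junk value [sup _ = 0]. *)
have [S_sup|S_nosup] := pselect (has_sup [set r | exists x, X x /\ r = dotp (F x) (ybar - x)]).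
  by apply: le_trans gap_z0 _; apply: sup_upper_bound => //; exists z0.
by rewrite /Gap sup_out.
Qed.

Lemma Gap_wavg_le B : X !=set0 ->
  (forall z, X z -> \sum_(j < k) c j * dotp (F z) (y j - z) <= B) ->
  Gap ybar F X <= (\sum_(j < k) c j)^-1 * B.
Proof.
move=> [x0 Xx0] c_le; apply: ge_sup; first by exists (dotp (F x0) (ybar - x0)), x0.
move=> _ [z [Xz ->]]; rewrite dotp_wavg ?gt_eqF //.
by rewrite ler_wpM2l ?invr_ge0 ?(ltW c_sum_gt0) ?c_le.
Qed.

End WeightedGap.

Section ExtragradientStep.
Variables (R : realType) (n : nat).
Notation V := 'rV[R]_n.
Variables (F H : V -> V) (DomF DomH X Omega : set V) (PX POm : V -> V) (LF LH mu : R).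
Hypotheses (F_mono : op_monotone_on DomF F) (F_lip : op_lipschitz_on DomF F LF).
Hypotheses (H_lip : op_lipschitz_on DomH H LH) (H_smono : op_strongly_monotone_on DomH H mu).
Hypotheses (LF_ge0 : 0 <= LF) (LH_ge0 : 0 <= LH) (mu_gt0 : 0 < mu).
Hypotheses (X_convex : convex_setE X) (Omega_convex : convex_setE Omega).
Hypotheses (PX_proj : is_proj X PX) (POm_proj : is_proj Omega POm).
Hypotheses (X_sub : X `<=` Omega) (Omega_sub : Omega `<=` DomF `&` DomH).

Lemma extragradient_descent (w w' y x' z : V) (lam eta : R) :
  0 <= lam -> 0 <= eta -> X z ->
  w' = POm w -> y = PX (w - lam *: (F w' + eta *: H w')) ->
  x' = PX (w - lam *: (F y + eta *: H y)) ->
  dotp (x' - z) (x' - z) <= dotp (w - z) (w - z)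
    - (1 - lam ^+ 2 * (LF + eta * LH) ^+ 2) * dotp (w - y) (w - y)
    - 2 * lam * dotp (F y + eta *: H y) (y - z).
Proof.
move=> lam_ge0 eta_ge0 Xz hw' hy hx.
have Xy : X y by rewrite hy; exact: (PX_proj _).1.
have Xx' : X x' by rewrite hx; exact: (PX_proj _).1.
have Ow' : Omega w' by rewrite hw'; exact: (POm_proj _).1.
have [DFw' DHw'] := Omega_sub Ow'.
have [DFy DHy] := Omega_sub (X_sub Xy).
set L := LF + eta * LH; set Gy := F y + eta *: H y; set Gw := F w' + eta *: H w'.
have x'_var : dotp (w - lam *: Gy - x') (z - x') <= 0.
  by rewrite hx; exact (proj_variational X_convex PX_proj _ Xz).
have y_var : dotp (w - lam *: Gw - y) (x' - y) <= 0.
  by rewrite hy; exact (proj_variational X_convex PX_proj _ Xx').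
have G_lip : enorm (Gw - Gy) <= L * enorm (w' - y).
  have -> : Gw - Gy = (F w' - F y) + eta *: (H w' - H y).
    by rewrite opprD addrACA scalerBr.
  apply: le_trans (ler_enormD _ _) _.
  rewrite enormZ ger0_norm // mulrDl -mulrA lerD ?F_lip // ler_wpM2l //.
  exact: H_lip.
have G_lip2 : dotp (Gw - Gy) (Gw - Gy) <= L ^+ 2 * dotp (w - y) (w - y).
  apply: le_trans (_ : L ^+ 2 * dotp (w' - y) (w' - y) <= _).
    rewrite -!enorm_sqr -exprMn ler_pXn2r ?nnegrE ?mulr_ge0 ?enorm_ge0 //.
    by rewrite addr_ge0 ?mulr_ge0.
  by rewrite ler_wpM2l ?sqr_ge0 // hw'; exact (proj_dist_le Omega_convex POm_proj _ (X_sub Xy)).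
have := dotp_young (lam *: (Gw - Gy)) (x' - y); rewrite !(dotpZl, dotpZr).
have := ler_wpM2l (sqr_ge0 lam) G_lip2 => G_bound young.
apply: extragradient_ineq x'_var y_var _; lra.
Qed.

Lemma regularized_operator_lower_bound (y z : V) (eta C D : R) :
  X y -> X z -> 0 <= eta -> enorm (H z) <= C -> enorm (y - z) <= D ->
  dotp (F z) (y - z) + eta * mu * dotp (y - z) (y - z) - eta * (C * D)
    <= dotp (F y + eta *: H y) (y - z).
Proof.
move=> Xy Xz eta_ge0 HzC yzD.
have [DFy DHy] := Omega_sub (X_sub Xy); have [DFz DHz] := Omega_sub (X_sub Xz).
have F_yz := F_mono DFy DFz; have H_yz := H_smono DHy DHz.
have Hz_yz : - (C * D) <= dotp (H z) (y - z).
  have := dotp_le_enorm (H z) (- (y - z)); rewrite dotpNr enormN.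
  have := ler_pM (enorm_ge0 _) (enorm_ge0 _) HzC yzD; lra.
rewrite enorm_sqr in H_yz; move: F_yz H_yz Hz_yz.
move: (y - z) => r; rewrite !dotpDl !dotpNl dotpZl => F_yz H_yz Hz_yz.
have := ler_wpM2l eta_ge0 H_yz; have := ler_wpM2l eta_ge0 Hz_yz; lra.
Qed.

Lemma extragradient_step (w w' y x' z : V) (lam eta C D : R) :
  0 < lam -> 0 < eta -> lam * (LF + eta * LH) < 1 -> X z ->
  enorm (H z) <= C -> enorm (y - z) <= D ->
  w' = POm w -> y = PX (w - lam *: (F w' + eta *: H w')) ->
  x' = PX (w - lam *: (F y + eta *: H y)) ->
  dotp (x' - z) (x' - z) <=
    (1 - ((1 - lam ^+ 2 * (LF + eta * LH) ^+ 2)^-1 + (2 * lam * eta * mu)^-1)^-1)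
      * dotp (w - z) (w - z)
    - 2 * lam * (dotp (F z) (y - z) - eta * (C * D)).
Proof.
move=> lam_gt0 eta_gt0 lamL Xz HzC yzD hw' hy hx.
have Xy : X y by rewrite hy; exact: (PX_proj _).1.
have descent := extragradient_descent (ltW lam_gt0) (ltW eta_gt0) Xz hw' hy hx.
have lower := regularized_operator_lower_bound Xy Xz (ltW eta_gt0) HzC yzD.
set L := LF + eta * LH in lamL descent *.
have a_gt0 : 0 < 1 - lam ^+ 2 * L ^+ 2.
  by apply: subr_sqrM_gt0 lamL; rewrite mulr_ge0 ?addr_ge0 ?mulr_ge0 // ltW.
have b_gt0 : 0 < 2 * lam * eta * mu by rewrite !mulr_gt0.
have := dotp_parallel_sum_le (w - y) (y - z) a_gt0 b_gt0; rewrite addrA subrK.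
have := ler_wpM2l (ltW (mulr_gt0 (ltr0n _ 2) lam_gt0)) lower.
lra.
Qed.

End ExtragradientStep.

Section InertialLyapunov.
Variables (R : realType) (a alpha beta eta delta r : nat -> R) (D2 : R).
Hypotheses (a_ge0 : forall j, 0 <= a j) (a_le : forall j, a j <= D2).
Hypotheses (alpha_ge0 : forall j, 0 <= alpha j) (alpha0_le1 : alpha 0%N <= 1).
Hypothesis alpha_decr : forall j, alpha j.+1 <= (1 - beta j) * alpha j.
Hypothesis beta_lt1 : forall j, beta j < 1.
Hypotheses (eta_ge0 : forall j, 0 <= eta j) (eta_noninc : forall j, eta j.+1 <= eta j).
Hypothesis a_step : forall j,
  a j.+1 <= (1 - beta j) * ((1 + alpha j) * a j - alpha j * a j.-1 + delta j) - r j.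

(* [pweight j.+1] is the paper's p_j and [pweight 0 = 1] its p_{-1}. *)
Definition pweight (m : nat) : R := (\prod_(i < m) (1 - beta i))^-1.

Lemma pweight0 : pweight 0%N = 1.
Proof. by rewrite /pweight big_ord0 invr1. Qed.

Lemma pweight_gt0 m : 0 < pweight m.
Proof. by rewrite invr_gt0 prodr_gt0 // => i _; rewrite subr_gt0. Qed.

Lemma pweightS j : pweight j.+1 * (1 - beta j) = pweight j.
Proof.
rewrite /pweight big_ord_recr /= invfM -mulrA mulVf ?mulr1 //.
by rewrite gt_eqF // subr_gt0.
Qed.

Definition lyap K := eta K * pweight K * (a K - alpha K * a K.-1 + alpha K * D2).

Lemma lyap_ge0 K : 0 <= lyap K.
Proof.
rewrite mulr_ge0 ?mulr_ge0 ?(ltW (pweight_gt0 K)) //.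
by have := a_le K.-1; have := a_ge0 K; have := alpha_ge0 K; nra.
Qed.

Lemma lyap0_le : lyap 0%N <= eta 0%N * D2.
Proof.
rewrite /lyap /= pweight0 mulr1 ler_wpM2l //.
have : 0 <= (1 - alpha 0%N) * (D2 - a 0%N) by rewrite mulr_ge0 // subr_ge0.
lra.
Qed.

Lemma lyap_step K :
  lyap K.+1 <= lyap K - eta K * pweight K.+1 * r K + eta K * pweight K * delta K.
Proof.
rewrite /lyap -(pweightS K) /=.
have p_gt0 := pweight_gt0 K.+1.
have ep_ge0 : 0 <= eta K * pweight K.+1 := mulr_ge0 (eta_ge0 K) (ltW p_gt0).
have eta_a : eta K.+1 * pweight K.+1 * a K.+1 <= eta K * pweight K.+1 * a K.+1.
  by rewrite ler_wpM2r // ler_wpM2r // ltW.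
have step_a := ler_wpM2l ep_ge0 (a_step K).
have eta_alpha : eta K.+1 * pweight K.+1 * alpha K.+1
    <= eta K * pweight K.+1 * ((1 - beta K) * alpha K).
  by apply: ler_pM; rewrite ?mulr_ge0 ?ler_wpM2r ?(ltW p_gt0).
have D2_a : 0 <= D2 - a K by rewrite subr_ge0.
have := ler_wpM2r D2_a eta_alpha; lra.
Qed.

Lemma weighted_residual_sum_le k :
  \sum_(j < k) eta j * pweight j.+1 * r j
    <= eta 0%N * D2 + \sum_(j < k) eta j * pweight j * delta j.
Proof.
have telescope K : lyap K + \sum_(j < K) eta j * pweight j.+1 * r j
    <= lyap 0%N + \sum_(j < K) eta j * pweight j * delta j.
  elim: K => [|K IH]; first by rewrite !big_ord0.
  by rewrite !big_ord_recr /=; have := lyap_step K; lra.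
by have := telescope k; have := lyap_ge0 k; have := lyap0_le; lra.
Qed.

End InertialLyapunov.

Unset Implicit Arguments.

Theorem proposition4p7 (R : realType) (n : nat)
  (F H : 'rV[R]_n -> 'rV[R]_n) (DomF DomH X Omega : set 'rV[R]_n)
  (LF LH mu : R) (PX POmega : 'rV[R]_n -> 'rV[R]_n)
  (alpha lambda eta : nat -> R)
  (x w w' y : nat -> 'rV[R]_n) :
  (* standing assumptions *)
  0 < LF -> 0 < LH ->
  op_monotone_on DomF F -> op_monotone_on DomH H ->
  op_lipschitz_on DomF F LF -> op_lipschitz_on DomH H LH ->
  X !=set0 -> compact X -> convex_setE X ->
  Omega !=set0 -> closed Omega -> convex_setE Omega ->
  X `<=` Omega -> Omega `<=` DomF `&` DomH ->
  is_proj X PX -> is_proj Omega POmega ->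
  VIsol F X !=set0 ->
  (* strong monotonicity of H *)
  0 < mu -> op_strongly_monotone_on DomH H mu ->
  (* IneIREG iterates, with x_{-1} = x_0 (encoded by x (k.-1) at k = 0) *)
  X (x 0%N) ->
  (forall k, 0 <= alpha k) -> (forall k, 0 < lambda k) -> (forall k, 0 < eta k) ->
  (forall k, w k = x k + alpha k *: (x k - x k.-1)) ->
  (forall k, w' k = POmega (w k)) ->
  (forall k, y k = PX (w k - lambda k *: (F (w' k) + eta k *: H (w' k)))) ->
  (forall k, x k.+1 = PX (w k - lambda k *: (F (y k) + eta k *: H (y k)))) ->
  (* parameter conditions *)
  (forall k, eta k.+1 <= eta k) ->
  (forall k, lambda k < 1 / (LF + eta k * LH)) ->
  0 <= alpha 0%N <= 1 ->
  let Lk k := LF + eta k * LH in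
  let beta k := ((1 - lambda k ^+ 2 * Lk k ^+ 2)^-1
                 + (2 * lambda k * eta k * mu)^-1)^-1 in
  (forall k, alpha k.+1 <= (1 - beta k) * alpha k) ->
  (* pp m = (prod_{i<m} (1 - beta i))^-1, so p_j = pp j.+1 and p_{j-1} = pp j *)
  let pp (m : nat) := (\prod_(i < m) (1 - beta i))^-1 in
  let delta k := alpha k * (1 + alpha k) * enorm (x k - x k.-1) ^+ 2 in
  forall k : nat, (1 <= k)%N ->
  let Lam := \sum_(j < k) lambda j * eta j * pp j.+1 in
  let ybar := Lam^-1 *: \sum_(j < k) (lambda j * eta j * pp j.+1) *: y j in
  0 <= Gap ybar F X /\
  Gap ybar F X <= (2 * Lam)^-1 *
    (eta 0%N * diam X ^+ 2 + \sum_(j < k) eta j * pp j * delta j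
     + 2 * (\sum_(j < k) lambda j * eta j ^+ 2 * pp j.+1) * supnorm X H * diam X).
Proof.
move=> LF_gt0 LH_gt0 F_mono _ F_lip H_lip X_ne X_compact X_convex _ _ Omega_convex
  X_sub Omega_sub PX_proj POm_proj sol mu_gt0 H_smono X_x0 alpha_ge0 lambda_gt0
  eta_gt0 hw hw' hy hx eta_noninc lambda_lt /andP[_ alpha0_le1] Lk beta alpha_decr
  pp delta k k_ge1 Lam ybar.
have X_x j : X (x j) by case: j => // j; rewrite hx; exact: (PX_proj _).1.
have X_y j : X (y j) by rewrite hy; exact: (PX_proj _).1.
have Lk_gt0 j : 0 < Lk j by rewrite addr_gt0 ?mulr_gt0.
have lamL j : lambda j * Lk j < 1.
  by have := lambda_lt j; rewrite (ltr_pdivlMr _ _ (Lk_gt0 j)).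
have beta_lt1 j : beta j < 1.
  by apply: contraction_rate_lt1 (lambda_gt0 j) (Lk_gt0 j) (lamL j) _; rewrite !mulr_gt0.
pose c j := lambda j * eta j * pp j.+1.
have c_gt0 j : 0 < c j by rewrite !mulr_gt0 ?(pweight_gt0 beta_lt1).
have Lam_gt0 : 0 < Lam := sumr_ord_gt0 k_ge1 c_gt0.
split; first by apply: (@Gap_wavg_ge0 _ _ F X c y k Lam_gt0) => // j; exact: ltW.
rewrite invfM [2^-1 * _]mulrC -[Lam^-1 * _ * _]mulrA.
apply: (@Gap_wavg_le _ _ F X c y k Lam_gt0) => // z Xz.
set C := supnorm X H; set D := diam X.
pose r j := 2 * lambda j * (dotp (F z) (y j - z) - eta j * (C * D)).
have Hz_le : enorm (H z) <= C.
  by apply: enorm_le_supnorm X_compact _ H_lip (ltW LH_gt0) Xz => v /X_sub /Omega_sub[].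
pose a j := dotp (x j - z) (x j - z).
have a_step j : a j.+1 <= (1 - beta j) * ((1 + alpha j) * a j - alpha j * a j.-1 + delta j) - r j.
  have := extragradient_step F_mono F_lip H_lip H_smono (ltW LF_gt0) (ltW LH_gt0) mu_gt0
    X_convex Omega_convex PX_proj POm_proj X_sub Omega_sub (lambda_gt0 j) (eta_gt0 j)
    (lamL j) Xz Hz_le (enorm_le_diam X_compact (X_y j) Xz) (hw' j) (hy j) (hx j).
  by rewrite hw dotp_extrapolate /delta enorm_sqr.
have res_le : \sum_(j < k) eta j * pp j.+1 * r j
    <= eta 0%N * D ^+ 2 + \sum_(j < k) eta j * pp j * delta j.
  exact: weighted_residual_sum_le (fun j => dotp_ge0 _) (fun j => dotp_le_diam X_compact (X_x j) Xz)
    alpha_ge0 alpha0_le1 alpha_decr beta_lt1 (fun j => ltW (eta_gt0 j)) eta_noninc a_step k.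
have sum_r : \sum_(j < k) eta j * pp j.+1 * r j =
    2 * \sum_(j < k) c j * dotp (F z) (y j - z)
    - 2 * (\sum_(j < k) lambda j * eta j ^+ 2 * pp j.+1) * C * D.
  rewrite !mulr_sumr !mulr_suml -sumrB; apply: eq_bigr => j _; rewrite /r /c; ring.
rewrite ler_pdivlMl //; lra.
Qed.
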